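(* Let $p$ be an odd prime. Let $\mathcal{L}=(L_1,\dots,L_m)$ be a square-independent system of linear forms in $d$ variables over $\mathbb{F}_p$, whose linear span has dimension $d'$. Let $\Gamma_1:\mathbb{F}_p^n\to\mathbb{F}_p^{d_1}$ be a surjective linear map and let $\Gamma_2:\mathbb{F}_p^n\to\mathbb{F}_p^{d_2}$ be a quadratic map of rank at least $r$. Let $a_1,\dots,a_m\in\mathbb{F}_p^{d_1}$ and $b_1,\dots,b_m\in\mathbb{F}_p^{d_2}$. Let $Z$ be the subspace of $(\mathbb{F}_p^{d_1})^m$ consisting of all $(c_1,\dots,c_m)$ with $\sum_i\mu_ic_i=0$ whenever $\mu\in\mathbb{F}_p^m$ satisfies $\sum_i\mu_iL_i=0$. If $\mathbf{x}$ is chosen uniformly at random from $(\mathbb{F}_p^n)^d$, then the probability that $\Gamma_1(L_i(\mathbf{x}))=a_i$ and $\Gamma_2(L_i(\mathbf{x}))=b_i$ for every $i\le m$ is zero if $(a_1,\dots,a_m)\notin Z$, and if $(a_1,\dots,a_m)\in Z$ it differs from $p^{-d_1d'-d_2m}$ by at most $p^{d_1-d'd_1-r/2}$.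
   Context: A linear form in $d$ variables is $L(x_1,\dots,x_d)=\sum_{r=1}^d\gamma_rx_r$ with $\gamma_r\in\mathbb{F}_p$; for $\mathbf{x}\in(\mathbb{F}_p^n)^d$, $L(\mathbf{x})=\sum_r\gamma_rx_r\in\mathbb{F}_p^n$. A system $(L_1,\dots,L_m)$ with $L_i=\sum_r\gamma^{(i)}_rx_r$ is square-independent if the $d\times d$ matrices $(\gamma^{(i)}_r\gamma^{(i)}_s)_{r,s}$ are linearly independent over $\mathbb{F}_p$. A quadratic form on $\mathbb{F}_p^n$ is $q(x)=x^TMx$, $M$ symmetric over $\mathbb{F}_p$, with associated bilinear form $\beta(x,y)=(q(x+y)-q(x)-q(y))/2$. A quadratic map $\Gamma_2=(q_1,\dots,q_{d_2})$ has rank at least $r$ if $\sum_j\lambda_j\beta_j$ has rank at least $r$ for every nonzero $\lambda\in\mathbb{F}_p^{d_2}$, where $\beta_j$ is the bilinear form of $q_j$. *)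

From HB Require Import structures.
From mathcomp Require Import all_boot all_order all_algebra.
From mathcomp Require Import reals exp.
Set Implicit Arguments. Unset Strict Implicit. Unset Printing Implicit Defensive.
Import Order.TTheory GRing.Theory Num.Theory.
Local Open Scope ring_scope.

Section Defs.
Variable F : fieldType.

(* A system of m linear forms in d variables is a matrix gamma : 'M_(m,d);
   row i holds the coefficients of L_i.  For X : 'M_(d,n) whose rows are
   x_1,...,x_d in F^n, L_i(X) = sum_r gamma i r *: x_r = row i (gamma *m X). *)
Definition Lform_eval (m d n : nat) (gamma : 'M[F]_(m, d)) (X : 'M[F]_(d, n))
    (i : 'I_m) : 'rV[F]_n := row i (gamma *m X).

Definition sq_mx (m d : nat) (gamma : 'M[F]_(m, d)) (i : 'I_m) : 'M[F]_d :=
  \matrix_(r, s) (gamma i r * gamma i s).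

Definition square_independent (m d : nat) (gamma : 'M[F]_(m, d)) : Prop :=
  forall c : 'I_m -> F, \sum_i c i *: sq_mx gamma i = 0 -> forall i, c i = 0.

Definition qform (n : nat) (M : 'M[F]_n) (x : 'rV[F]_n) : F := (x *m M *m x^T) 0 0.

Definition bilin (n : nat) (M : 'M[F]_n) (x y : 'rV[F]_n) : F :=
  (qform M (x + y) - qform M x - qform M y) / 2%:R.

Definition bform_rank (n : nat) (beta : 'rV[F]_n -> 'rV[F]_n -> F) : nat :=
  \rank (\matrix_(i, j) beta (delta_mx 0 i) (delta_mx 0 j)).

(* quadratic map Gamma_2 = (q_1,...,q_d2), q_j given by symmetric Ms j,
   has rank at least r *)
Definition qmap_rank_ge (n d2 : nat) (Ms : 'I_d2 -> 'M[F]_n) (r : nat) : Prop :=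
  forall lam : 'rV[F]_d2, lam != 0 ->
    leq r (bform_rank (fun x y => \sum_j lam ord0 j * bilin (Ms j) x y)).

(* The subspace Z of (F^d1)^m (tuples stored as rows of A : 'M_(m,d1)) *)
Definition in_Z (m d d1 : nat) (gamma : 'M[F]_(m, d)) (A : 'M[F]_(m, d1)) : Prop :=
  forall mu : 'rV[F]_m, mu *m gamma = 0 -> mu *m A = 0.

End Defs.

From HB Require Import structures.
From mathcomp Require Import all_boot all_order all_algebra.
From mathcomp Require Import reals exp.
From mathcomp Require Import algC cyclotomic zify ring.
Set Implicit Arguments.
Unset Strict Implicit.
Unset Printing Implicit Defensive.
Import Order.TTheory GRing.Theory Num.Theory.
Local Open Scope ring_scope.

(* The linear conditions Gamma_1(L_i(X)) = a_i cut out a coset X0 + K of the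
   kernel K of X |-> (Gamma_1(L_i(X)))_i; the coset exists iff (a_i) lies in Z,
   and #|K| = p^(dn - d1 d').  The quadratic conditions are detected with
   additive characters e of F_p: p^(m d2) times the count equals the sum over
   lam in F_p^(m x d2) of sum_(k in K) e(sum_(i,j) lam_ij (q_j(L_i(X0 + k)) - b_ij)).
   The term lam = 0 is #|K|.  For lam <> 0, multiplying the inner sum by its
   conjugate and shifting k (Weyl differencing) bounds its square by #|K| times
   the size of the radical of the bilinear form sum_i lam_i.beta(L_i x, L_i y)
   on K.  Square independence gives r0, s0 with sum_i lam_i gamma_i,r0 gamma_i,s0
   <> 0; the corresponding combination of the q_j has rank >= r, which bounds
   the radical by #|K| p^(2 d1 - r).  So every lam <> 0 contributes at most
   #|K| p^(d1 - r/2). *)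

Section FinLinearAlgebra.
Variable F : finFieldType.

Lemma card_submx k n a (U : 'M[F]_(a, n)) :
  #|[set Y : 'M[F]_(k, n) | (Y <= U)%MS]| = (#|F| ^ (k * \rank U))%N.
Proof.
rewrite -card_mx.
have inj : injective (fun W : 'M[F]_(k, \rank U) => W *m row_base U).
  exact: row_free_inj (row_base_free U).
rewrite -(card_imset _ inj); apply: eq_card => Y; rewrite inE.
apply/idP/imsetP => [|[W _ ->]]; last by rewrite -(eq_row_base U) submxMl.
by rewrite -(eq_row_base U) => /submxP[W ->]; exists W.
Qed.

Lemma trmx_sub_of_ker m d k (C : 'M[F]_(m, d)) (A : 'M[F]_(m, k)) :
  (forall mu : 'rV_m, mu *m C = 0 -> mu *m A = 0) -> (A^T <= C^T)%MS.
Proof.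
move=> kerCA; rewrite submxE -trmx0 -[_ *m _]trmxK trmx_mul trmxK.
apply/eqP; congr trmx; apply/row_matrixP => i; rewrite row_mul row0.
apply: kerCA; rewrite -row_mul.
by rewrite -[C in _ *m C]trmxK -trmx_mul mulmx_coker trmx0 row0.
Qed.

End FinLinearAlgebra.

Section AdditiveFibers.
Variables (V W : finZmodType) (f : V -> W).
Hypothesis fB : {morph f : x y / x - y}.
Variable K : {pred V}.
Hypothesis KB : {in K &, forall x y, x - y \in K}.
Hypothesis KD : {in K &, forall x y, x + y \in K}.

Lemma card_preim_additive (U : {pred W}) :
  #|[set x in K | f x \in U]| =
  (#|[set x in K | f x == 0%R]| * #|[set w in f @: [set x in K] | w \in U]|)%N.
Proof.
have f0 : f 0 = 0 by rewrite -(subrr 0) fB subrr.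
rewrite -sum1_card (partition_big f (mem [set w in f @: [set x in K] | w \in U]));
  last by move=> x; rewrite !inE => /andP[Kx ->]; rewrite andbT imset_f ?inE.
rewrite mulnC -sum_nat_const; apply: eq_bigr => _ /[!inE] /andP[/imsetP[x0 + ->] Ux0].
rewrite inE sum1_card => Kx0.
rewrite -(card_imset [set x in K | f x == 0] (addrI x0)); apply: eq_card => x.
rewrite -[in LHS]topredE /= inE; apply/idP/imsetP.
  case/andP=> /andP[Kx _] /eqP fx; exists (x - x0); last by rewrite addrC subrK.
  by rewrite inE KB //= fB fx subrr eqxx.
case=> h /[!inE] /andP[Kh /eqP fh] ->.
have fN y : f (- y) = - f y by rewrite -sub0r fB f0 sub0r.
have fD : f (x0 + h) = f x0 + f h by rewrite -{1}[h]opprK fB fN opprK.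
by rewrite KD // fD fh addr0 Ux0 eqxx.
Qed.

End AdditiveFibers.

Section AdditiveCharacter.
Variable p : nat.
Hypothesis p_pr : prime p.
Local Notation F := 'F_p.

Definition zeta : algC := projT1 (C_prim_root_exists (prime_gt0 p_pr)).

Lemma zeta_prim : p.-primitive_root zeta.
Proof. exact: projT2 (C_prim_root_exists (prime_gt0 p_pr)). Qed.

Definition echar (x : F) : algC := zeta ^+ x.

Lemma Fp_val_lt (x : F) : (x < p)%N.
Proof. by rewrite -[X in (_ < X)%N](Fp_cast p_pr). Qed.

Lemma Fp_natr_val (x : F) : (x : nat)%:R = x.
Proof. by apply: val_inj; rewrite /= val_Fp_nat // modn_small // Fp_val_lt. Qed.

Lemma echarD x y : echar (x + y) = echar x * echar y.
Proof.
rewrite /echar -exprD -{1}(Fp_natr_val x) -{1}(Fp_natr_val y) -natrD val_Fp_nat //.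
by rewrite expr_mod // prim_expr_order // zeta_prim.
Qed.

Lemma echar0 : echar 0 = 1.
Proof. exact: expr0. Qed.

Lemma echar_eq1 x : (echar x == 1) = (x == 0).
Proof.
apply/idP/eqP => [|->]; last by rewrite echar0.
rewrite /echar -(prim_order_dvd zeta_prim) => /dvdnP[[|k] xE]; apply: val_inj => //.
by have := Fp_val_lt x; rewrite xE mulSn; lia.
Qed.

Lemma norm_echar x : `|echar x| = 1.
Proof.
apply/eqP; rewrite -(pexpr_eq1 (prime_gt0 p_pr)) ?normr_ge0 // -normrX /echar.
by rewrite -exprM mulnC exprM (prim_expr_order zeta_prim) expr1n normr1.
Qed.

Lemma conj_echar x : (echar x)^* = echar (- x).
Proof.
have nz : echar x != 0 by rewrite -normr_eq0 norm_echar oner_eq0.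
apply: (mulIf nz); rewrite -echarD addNr echar0.
by rewrite mulrC -normCK norm_echar expr1n.
Qed.

Lemma sum_echar_eq0 (V : finZmodType) (g : V -> F) (K : {pred V}) k0 :
  {morph g : x y / x + y} ->
  {in K &, forall x y, x + y \in K} -> {in K &, forall x y, x - y \in K} ->
  k0 \in K -> g k0 != 0 -> \sum_(x in K) echar (g x) = 0.
Proof.
move=> gD KD KB Kk0 gk0; set S := \sum_(x in K) _.
have SE : S = S * echar (g k0).
  rewrite /S mulr_suml (reindex_inj (addIr k0)) /=; apply: eq_big => x.
    by apply/idP/idP => Kx; [rewrite -(addrK k0 x) KB | rewrite KD].
  by move=> _; rewrite gD echarD.
apply/eqP; move/eqP: SE; rewrite eq_sym -subr_eq0 -{2}[S]mulr1 -mulrBr mulf_eq0.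
by rewrite subr_eq0 echar_eq1 (negbTE gk0) orbF.
Qed.

Lemma sum_echar_mxdot a b (v : 'M[F]_(a, b)) :
  \sum_(lam : 'M[F]_(a, b)) echar (\sum_i \sum_j lam i j * v i j) =
  (v == 0)%:R * (p ^ (a * b))%:R.
Proof.
have [->|v_nz] := eqVneq v 0.
  rewrite mul1r -[X in (X ^ _)%N](card_Fp p_pr) -card_mx -sum1_card natr_sum.
  apply: eq_bigr => lam _; rewrite big1 ?echar0 // => i _.
  by rewrite big1 // => j _; rewrite mxE mulr0.
have [i0 [j0 vij]] : exists i0 j0, v i0 j0 != 0.
  have : ~~ [forall i, forall j, v i j == 0].
    apply: contra v_nz => /forallP v0; apply/eqP/matrixP => i j.
    by rewrite mxE; exact/eqP/(forallP (v0 i)).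
  rewrite negb_forall => /existsP[i0]; rewrite negb_forall => /existsP[j0 vij].
  by exists i0, j0.
rewrite mul0r (@sum_echar_eq0 _ _ predT (delta_mx i0 j0)) //.
- move=> x y; rewrite -big_split; apply: eq_bigr => i _.
  by rewrite -big_split; apply: eq_bigr => j _; rewrite mxE mulrDl.
rewrite (bigD1 i0) //= (bigD1 j0) //= !big1 ?addr0 ?mxE ?eqxx ?mul1r //.
  by move=> i /negbTE i_ne; rewrite big1 // => j _; rewrite mxE i_ne mul0r.
by move=> j /negbTE j_ne; rewrite mxE eqxx j_ne mul0r.
Qed.

End AdditiveCharacter.

Section GramForm.
Variables (F : fieldType) (n : nat).
Implicit Types (x y : 'rV[F]_n) (M : 'M[F]_n).

Definition bform x M y : F := (x *m M *m y^T) 0 0.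

Lemma bformC x M y : M^T = M -> bform x M y = bform y M x.
Proof.
move=> MT; rewrite /bform -[in LHS](trmxK (x *m M *m y^T)) [in LHS]mxE.
by rewrite !trmx_mul trmxK MT mulmxA.
Qed.

Lemma bformDl x1 x2 M y : bform (x1 + x2) M y = bform x1 M y + bform x2 M y.
Proof. by rewrite /bform !mulmxDl mxE. Qed.

Lemma bformDr x M y1 y2 : bform x M (y1 + y2) = bform x M y1 + bform x M y2.
Proof. by rewrite /bform linearD /= mulmxDr mxE. Qed.

Lemma bformZl c x M y : bform (c *: x) M y = c * bform x M y.
Proof. by rewrite /bform -!scalemxAl mxE. Qed.

Lemma bform_sumZ (I : finType) (c : I -> F) (Ms : I -> 'M[F]_n) x y :
  bform x (\sum_i c i *: Ms i) y = \sum_i c i * bform x (Ms i) y.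
Proof.
rewrite /bform mulmx_sumr mulmx_suml summxE; apply: eq_bigr => i _.
by rewrite -scalemxAr -scalemxAl mxE.
Qed.

Lemma bform_delta M i j : bform (delta_mx 0 i) M (delta_mx 0 j) = M i j.
Proof. by rewrite /bform trmx_delta -rowE -colE !mxE. Qed.

Lemma qformE M x : qform M x = bform x M x.
Proof. by []. Qed.

Lemma qformD M x y : M^T = M ->
  qform M (x + y) = qform M x + 2%:R * bform x M y + qform M y.
Proof. by move=> MT; rewrite !qformE bformDl !bformDr (bformC y); first ring. Qed.

Lemma bilinE M x y : M^T = M -> 2%:R != 0 :> F -> bilin M x y = bform x M y.
Proof.
move=> MT two_nz; rewrite /bilin qformD //.
by rewrite addrAC addrK addrC addKr mulrC mulKf.
Qed.

End GramForm.

Lemma powR_dev_le (R : realType) (p N K a b c r : nat) : (0 < p)%N -> (0 < K)%N ->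
  (((N * p ^ b)%:Z - K%:Z) ^+ 2 * (p ^ r)%:Z <= ((p ^ b * K * p ^ c)%:Z) ^+ 2)%R ->
  `|N%:R / (K * p ^ a)%:R - (p%:R : R) `^ (- (a%:R + b%:R))|
       <= (p%:R : R) `^ (c%:R - a%:R - r%:R / 2).
Proof.
move=> p_gt0 K_gt0; rewrite -(ler_int R) rmorphM /= !rmorphXn /= rmorphB /= => le_sq.
set P : R := p%:R.
have P_gt0 : 0 < P by rewrite ltr0n.
have Pn k : P `^ k%:R = P ^+ k by rewrite powR_mulrn // ltW.
set s := P `^ (r%:R / 2).
have s_gt0 : 0 < s by apply: powR_gt0.
have s2 : s ^+ 2 = (p ^ r)%:R.
  rewrite -powR_mulrn ?powR_ge0 // -powRrM divfK ?pnatr_eq0 //.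
  by rewrite powR_mulrn ?ler0n // natrX.
rewrite powRN -natrD Pn !powRD ?(gt_eqF P_gt0) ?implybT // !powRN !Pn -/s.
set D : R := (N * p ^ b)%:R - K%:R.
have leD : `|D| * s <= (p ^ b * K * p ^ c)%:R.
  have nnD : `|D| * s \in Num.nneg by rewrite nnegrE mulr_ge0 ?normr_ge0 ?ltW.
  rewrite -(ler_pXn2r (isT : (0 < 2)%N) nnD) ?nnegrE ?ler0n //.
  by rewrite exprMn real_normK ?rpredB ?realn // s2 natrX.
have K_gt0' : 0 < (K%:R : R) by rewrite ltr0n.
have X_nz : K%:R * P ^+ a * P ^+ b != 0.
  by rewrite !mulf_neq0 ?expf_neq0 ?(gt_eqF K_gt0') ?(gt_eqF P_gt0).
have pos : 0 < K%:R * P ^+ a * P ^+ b * s by rewrite !mulr_gt0 ?exprn_gt0.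
have -> : N%:R / (K * p ^ a)%:R - (P ^+ (a + b))^-1 = D / (K%:R * P ^+ a * P ^+ b).
  rewrite /D !natrM !natrX -/P exprD; field.
  by rewrite !expf_neq0 ?(gt_eqF K_gt0') ?(gt_eqF P_gt0).
rewrite normf_div [X in _ / X]ger0_norm; last by rewrite ltW // !mulr_gt0 ?exprn_gt0.
rewrite -(ler_pM2r pos) mulrA divfK //.
have -> : P ^+ c / P ^+ a / s * (K%:R * P ^+ a * P ^+ b * s) = (p ^ b * K * p ^ c)%:R.
  rewrite !natrM !natrX -/P; field.
  by rewrite !expf_neq0 ?(gt_eqF P_gt0) ?(gt_eqF s_gt0).
exact: leD.
Qed.

Section QuadraticCounting.
Variable p : nat.
Hypothesis p_pr : prime p.
Hypothesis p_odd : odd p.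
Local Notation F := 'F_p.
Local Notation e := (echar p_pr).
Variables (m d n d1 d2 r : nat).
Variable gamma : 'M[F]_(m, d).
Hypothesis gamma_sqind : square_independent gamma.
Variable G1 : 'M[F]_(n, d1).
Hypothesis G1_onto : forall y : 'rV[F]_d1, exists x : 'rV[F]_n, x *m G1 = y.
Variable Ms : 'I_d2 -> 'M[F]_n.
Hypothesis Ms_sym : forall j, (Ms j)^T = Ms j.
Hypothesis Ms_rank : qmap_rank_ge Ms r.

Local Notation L := (Lform_eval gamma).
Implicit Types (X Y Z h k : 'M[F]_(d, n)) (lam : 'M[F]_(m, d2)).

Lemma card_F : #|F| = p.
Proof. exact: card_Fp. Qed.

Lemma two_neq0 : 2%:R != 0 :> F.
Proof.
rewrite -(dvdn_pcharf (pchar_Fp p_pr)); apply/negP => /dvdn_leq-/(_ isT).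
by have := prime_gt1 p_pr; case: p p_odd => [|[|[|q]]].
Qed.

Lemma rank_G1 : \rank G1 = d1.
Proof.
apply/eqP; rewrite -/(row_full G1) -sub1mx; apply/row_subP => i.
by have [x <-] := G1_onto (row i 1%:M); apply: submxMl.
Qed.

Lemma L_delta s (y : 'rV[F]_n) i : L (delta_mx s 0 *m y) i = gamma i s *: y.
Proof.
by rewrite /Lform_eval mulmxA -colE row_mul [row i _]mx11_scalar mul_scalar_mx !mxE.
Qed.

Definition Gamma1L (X : 'M[F]_(d, n)) : 'M[F]_(m, d1) := gamma *m X *m G1.
Definition kerGamma1L := [set X | Gamma1L X == 0].

Lemma Gamma1LB : {morph Gamma1L : X Y / X - Y}.
Proof. by move=> X Y; rewrite /Gamma1L mulmxBr mulmxBl. Qed.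

Lemma Gamma1LD : {morph Gamma1L : X Y / X + Y}.
Proof. by move=> X Y; rewrite /Gamma1L mulmxDr mulmxDl. Qed.

Lemma kerGamma1LB : {in kerGamma1L &, forall X Y, X - Y \in kerGamma1L}.
Proof. by move=> X Y; rewrite !inE Gamma1LB => /eqP-> /eqP->; rewrite subr0. Qed.

Lemma kerGamma1LD : {in kerGamma1L &, forall X Y, X + Y \in kerGamma1L}.
Proof. by move=> X Y; rewrite !inE Gamma1LD => /eqP-> /eqP->; rewrite addr0. Qed.

Lemma delta_in_kerGamma1L s (y : 'rV[F]_n) :
  y *m G1 = 0 -> delta_mx s 0 *m y \in kerGamma1L.
Proof. by move=> yG; rewrite inE /Gamma1L !mulmxA -(mulmxA _ y) yG mulmx0. Qed.

Lemma Gamma1L_onto (Y : 'M[F]_(m, d1)) : (Y^T <= gamma^T)%MS ->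
  exists X, Gamma1L X = Y.
Proof.
case/submxP=> W YW; exists (W^T *m pinvmx G1).
have G1_full : row_full G1 by rewrite /row_full rank_G1.
rewrite /Gamma1L -mulmxA mulmxKpV ?submx_full //.
by rewrite -[Y]trmxK YW trmx_mul trmxK.
Qed.

Lemma card_kerGamma1L :
  (#|kerGamma1L| * p ^ (d1 * \rank gamma) = p ^ (d * n))%N.
Proof.
have := card_preim_additive Gamma1LB (K := predT) (in2W (fun _ _ => isT))
  (in2W (fun _ _ => isT)) predT.
have -> : #|[set X in predT | Gamma1L X \in predT]| = (#|F| ^ (d * n))%N.
  by rewrite -card_mx; apply: eq_card => X; rewrite !inE.
have -> : #|[set X in predT | Gamma1L X == 0]| = #|kerGamma1L|.
  by apply: eq_card => X; rewrite !inE.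
suff -> : #|[set Y in Gamma1L @: [set X in predT] | Y \in predT]| =
          (#|F| ^ (d1 * \rank gamma))%N by rewrite card_F => ->.
rewrite -mxrank_tr -(card_submx d1 gamma^T).
rewrite -(card_imset _ (@trmx_inj _ m d1)); apply: eq_card => Z; rewrite !inE.
apply/imsetP/idP => [[Y /[!inE] /andP[/imsetP[X _ ->] _] ->]|sub].
  by rewrite /Gamma1L !trmx_mul mulmxA submxMl.
have [X XZ] : exists X, Gamma1L X = Z^T by apply: Gamma1L_onto; rewrite trmxK.
by exists Z^T; rewrite ?trmxK // !inE andbT -XZ imset_f ?inE.
Qed.

Lemma card_Gamma1L_fiber A X0 : Gamma1L X0 = A ->
  #|[set X | Gamma1L X == A]| = #|kerGamma1L|.
Proof.
move=> X0A; rewrite -(card_imset kerGamma1L (addrI X0)); apply: eq_card => X.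
rewrite inE; apply/eqP/imsetP => [XA|[k /[!inE] /eqP k0 ->]].
  by exists (X - X0); rewrite ?inE ?Gamma1LB ?XA ?X0A ?subrr // addrC subrK.
by rewrite Gamma1LD k0 addr0.
Qed.

Lemma Gamma1L_fiber_nonempty A : in_Z gamma A -> exists X0, Gamma1L X0 = A.
Proof. by move/trmx_sub_of_ker; apply: Gamma1L_onto. Qed.

Definition Mlam (lam : 'M[F]_(m, d2)) i : 'M[F]_n := \sum_j lam i j *: Ms j.
Definition Qlam lam X := \sum_i bform (L X i) (Mlam lam i) (L X i).
Definition Blam lam X Y := \sum_i bform (L X i) (Mlam lam i) (L Y i).

Lemma Mlam_sym lam i : (Mlam lam i)^T = Mlam lam i.
Proof. by rewrite /Mlam linear_sum; apply: eq_bigr => j _; rewrite linearZ /= Ms_sym. Qed.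

Lemma LD X Y i : L (X + Y) i = L X i + L Y i.
Proof. by rewrite /Lform_eval mulmxDr linearD. Qed.

Lemma LB X Y i : L (X - Y) i = L X i - L Y i.
Proof. by rewrite /Lform_eval mulmxBr linearB. Qed.

Lemma QlamD lam X Y : Qlam lam (X + Y) = Qlam lam X + 2%:R * Blam lam X Y + Qlam lam Y.
Proof.
rewrite /Qlam /Blam mulr_sumr -!big_split /=; apply: eq_bigr => i _.
by rewrite LD -!qformE qformD ?Mlam_sym.
Qed.

Lemma BlamDl lam X Y Z : Blam lam (X + Y) Z = Blam lam X Z + Blam lam Y Z.
Proof. by rewrite /Blam -big_split; apply: eq_bigr => i _; rewrite LD bformDl. Qed.

Definition Blam_row lam s h : 'rV[F]_n := \sum_i gamma i s *: (L h i *m Mlam lam i).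

Lemma Blam_rowB lam s : {morph Blam_row lam s : x y / x - y}.
Proof.
by move=> x y; rewrite /Blam_row -sumrB; apply: eq_bigr => i _; rewrite LB mulmxBl scalerBr.
Qed.

Lemma Blam_delta lam s (y : 'rV[F]_n) h :
  Blam lam (delta_mx s 0 *m y) h = (y *m (Blam_row lam s h)^T) 0 0.
Proof.
rewrite /Blam /Blam_row linear_sum mulmx_sumr summxE; apply: eq_bigr => i _.
by rewrite L_delta bformZl linearZ /= -scalemxAr trmx_mul Mlam_sym mulmxA [in RHS]mxE.
Qed.

Definition sq_coef lam r0 s0 : 'rV[F]_d2 :=
  \row_j \sum_i lam i j * (gamma i r0 * gamma i s0).
Definition Ms_comb (v : 'rV[F]_d2) : 'M[F]_n := \sum_j v 0 j *: Ms j.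

Lemma Blam_row_delta lam r0 s0 (y : 'rV[F]_n) :
  Blam_row lam s0 (delta_mx r0 0 *m y) = y *m Ms_comb (sq_coef lam r0 s0).
Proof.
transitivity (y *m \sum_i (gamma i r0 * gamma i s0) *: Mlam lam i).
  rewrite mulmx_sumr; apply: eq_bigr => i _.
  by rewrite L_delta -scalemxAl scalerA -scalemxAr mulrC.
rewrite /Ms_comb /Mlam; congr (_ *m _).
under eq_bigr do rewrite scaler_sumr.
rewrite exchange_big; apply: eq_bigr => j _.
by rewrite mxE scaler_suml; apply: eq_bigr => i _; rewrite scalerA mulrC.
Qed.

Lemma sq_coef_neq0 lam : lam != 0 -> exists r0 s0, sq_coef lam r0 s0 != 0.
Proof.
move=> lam_nz; have : ~~ [forall r0, forall s0, sq_coef lam r0 s0 == 0].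
  apply: contra lam_nz => /forallP sq0; apply/eqP/matrixP => i j; rewrite mxE.
  have sq0j : \sum_l lam l j *: sq_mx gamma l = 0.
    apply/matrixP => a b; have /eqP/matrixP/(_ 0 j) := forallP (sq0 a) b.
    by rewrite !mxE => <-; rewrite summxE; apply: eq_bigr => l _; rewrite !mxE.
  exact: gamma_sqind sq0j i.
rewrite negb_forall => /existsP[r0]; rewrite negb_forall => /existsP[s0 nz].
by exists r0, s0.
Qed.

Lemma rank_Ms_comb (v : 'rV[F]_d2) : v != 0 -> (r <= \rank (Ms_comb v))%N.
Proof.
move=> /Ms_rank; congr (_ <= \rank _)%N; apply/matrixP => a b.
rewrite mxE summxE; apply: eq_bigr => j _.
by rewrite bilinE ?Ms_sym ?two_neq0 // bform_delta mxE.
Qed.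

Definition radical lam :=
  [set h in kerGamma1L | [forall k in kerGamma1L, Blam lam k h == 0]].

(* A vector orthogonal to every y with y G1 = 0 lies in the row space of G1^T. *)
Lemma radical_Blam_row_sub lam s h :
  h \in radical lam -> (Blam_row lam s h <= G1^T)%MS.
Proof.
rewrite inE => /andP[_ /forallP radh]; rewrite -[Blam_row _ _ _]trmxK.
apply: trmx_sub_of_ker => y yG; have /implyP := radh (delta_mx s 0 *m y).
rewrite delta_in_kerGamma1L // Blam_delta => /(_ isT) /eqP B0.
by rewrite [LHS]mx11_scalar B0; apply/matrixP => a b; rewrite !mxE mul0rn.
Qed.

Lemma card_radical_le lam s :
  (#|radical lam| <= #|[set h in kerGamma1L | Blam_row lam s h == 0%R]| * p ^ d1)%N.
Proof.
pose U := [pred u : 'rV[F]_n | (u <= G1^T)%MS].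
have := card_preim_additive (Blam_rowB lam s) kerGamma1LB kerGamma1LD U.
set I := #|[set w in _ | _]| => cardU.
have le_I : (I <= p ^ d1)%N.
  rewrite -card_F -rank_G1 -mxrank_tr -[X in (_ ^ X)%N]mul1n -card_submx.
  by apply: subset_leq_card; apply/subsetP => w; rewrite !inE => /andP[_ ->].
apply: leq_trans (leq_mul (leqnn _) le_I); rewrite -cardU.
apply: subset_leq_card; apply/subsetP => h radh.
by rewrite inE [_ \in U](radical_Blam_row_sub s radh) andbT; case/setIdP: radh.
Qed.

Lemma card_Blam_row_image_ge lam r0 s0 : sq_coef lam r0 s0 != 0 ->
  (p ^ r <= #|Blam_row lam s0 @: kerGamma1L| * p ^ d1)%N.
Proof.
move=> /rank_Ms_comb le_r; set P := Ms_comb _ in le_r.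
have le_rk : (r <= \rank (kermx G1 *m P) + d1)%N.
  have := mxrank_mul_min (kermx G1) P; rewrite mxrank_ker rank_G1.
  by have := rank_leq_col P; have := rank_leq_row G1; rewrite rank_G1; lia.
apply: leq_trans (leq_pexp2l (prime_gt0 p_pr) le_rk) _; rewrite expnD leq_mul2r.
apply/orP; right; rewrite -[X in (X ^ _)%N]card_F -[X in (_ ^ X)%N]mul1n -card_submx.
apply: subset_leq_card; apply/subsetP => v; rewrite inE => /submxP[w ->].
apply/imsetP; exists (delta_mx r0 0 *m (w *m kermx G1)).
  by rewrite delta_in_kerGamma1L // -mulmxA mulmx_ker mulmx0.
by rewrite Blam_row_delta mulmxA.
Qed.

(* The polar map h |-> Blam_row lam s0 h has kernel of size #|K| / #|image|,
   and the radical lies in its preimage of the p^d1-element space <G1^T>. *)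
Lemma card_radical_bound lam : lam != 0 ->
  (#|radical lam| * p ^ r <= #|kerGamma1L| * p ^ (2 * d1))%N.
Proof.
move=> /sq_coef_neq0[r0 [s0 /card_Blam_row_image_ge le_image]].
have := card_preim_additive (Blam_rowB lam s0) kerGamma1LB kerGamma1LD predT.
have -> : #|[set h in kerGamma1L | Blam_row lam s0 h \in predT]| = #|kerGamma1L|.
  by apply: eq_card => h; rewrite !inE andbT.
have -> : [set w in Blam_row lam s0 @: [set h in kerGamma1L] | w \in predT] =
          Blam_row lam s0 @: kerGamma1L.
  have -> : [set h in kerGamma1L] = kerGamma1L by apply/setP => h; rewrite inE.
  by apply/setP => w; rewrite !inE andbT.
move=> ->; apply: leq_trans (leq_mul (card_radical_le lam s0) le_image) _.
by rewrite mul2n -addnn expnD !mulnA (mulnAC _ (p ^ d1)%N).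
Qed.

Lemma sum_echar_Blam lam h : h \in kerGamma1L ->
  \sum_(k in kerGamma1L) e (2%:R * Blam lam k h) =
  (h \in radical lam)%:R * #|kerGamma1L|%:R.
Proof.
move=> Kh; have [radh|nradh] := boolP (h \in radical lam).
  rewrite mul1r -sum1_card natr_sum; apply: eq_bigr => k Kk.
  move: radh; rewrite inE => /andP[_ /forallP /(_ k) /implyP /(_ Kk) /eqP->].
  by rewrite mulr0 echar0.
move: nradh; rewrite mul0r inE Kh negb_forall => /existsP[k0].
rewrite negb_imply => /andP[Kk0 Bk0].
apply: (sum_echar_eq0 p_pr _ kerGamma1LD kerGamma1LB Kk0); last first.
  by rewrite mulf_neq0 ?two_neq0.
by move=> x y; rewrite BlamDl mulrDr.
Qed.

Lemma sum_radical_indicator lam :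
  \sum_(h in kerGamma1L) ((h \in radical lam)%:R : algC) = #|radical lam|%:R.
Proof.
rewrite -sum1_card natr_sum (bigID (mem (radical lam))) /= [X in _ + X]big1 ?addr0.
  apply: eq_big => [h|h /andP[_ ->] //].
  by apply/andP/idP => [[]//|radh]; split=> //; case/setIdP: radh.
by move=> h /andP[_ /negbTE->].
Qed.

(* Weyl differencing: shifting the summation variable by k' turns the
   product of the sum with its conjugate into a sum of linear characters. *)
Lemma norm_quad_sum_sqr_le lam X0 c :
  `|\sum_(k in kerGamma1L) e (Qlam lam (X0 + k) + c)| ^+ 2 <=
  (#|radical lam| * #|kerGamma1L|)%:R.
Proof.
set g := fun k => Qlam lam (X0 + k) + c; set S := \sum_(k in _) _.
have shiftS k' : k' \in kerGamma1L -> S * e (- g k') =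
    \sum_(h in kerGamma1L)
      e (2%:R * Blam lam X0 h + Qlam lam h) * e (2%:R * Blam lam k' h).
  move=> Kk'; rewrite /S mulr_suml (reindex_inj (addrI k')) /=.
  apply: eq_big => [h|h _].
    apply/idP/idP => Kh; last exact: kerGamma1LD.
    by rewrite -(addKr k' h) addrC kerGamma1LB.
  by rewrite -!echarD /g addrA (QlamD _ (X0 + k')) BlamDl; congr e; ring.
rewrite -[X in X <= _]ger0_norm ?exprn_ge0 // normCK.
have -> : S^* = \sum_(k in kerGamma1L) e (- g k).
  by rewrite rmorph_sum; apply: eq_bigr => k _; apply: conj_echar.
rewrite mulr_sumr (eq_bigr _ shiftS) exchange_big /=.
under eq_bigr do rewrite -mulr_sumr.
apply: le_trans (ler_norm_sum _ _ _) _.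
rewrite natrM -sum_radical_indicator mulr_suml ler_sum // => h Kh.
by rewrite normrM norm_echar mul1r sum_echar_Blam // ger0_norm ?mulr_ge0 ?ler0n.
Qed.

Lemma norm_quad_sum_le lam X0 c : lam != 0 ->
  `|\sum_(k in kerGamma1L) e (Qlam lam (X0 + k) + c)| * sqrtC (p ^ r)%:R <=
  (#|kerGamma1L| * p ^ d1)%:R.
Proof.
move=> /card_radical_bound le_rad.
rewrite -(ler_pXn2r (n := 2)) ?nnegrE ?mulr_ge0 ?sqrtC_ge0 ?ler0n //.
rewrite exprMn sqrtCK; apply: le_trans (ler_wpM2r (ler0n _ _) (norm_quad_sum_sqr_le _ _ _)) _.
rewrite -natrM -natrX ler_nat (mulnC #|radical lam|) -mulnA.
have -> : ((#|kerGamma1L| * p ^ d1) ^ 2 = #|kerGamma1L| * (#|kerGamma1L| * p ^ (2 * d1)))%N.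
  by rewrite expnMn -expnM mulnA mulnn (mulnC d1).
by rewrite leq_mul2l le_rad orbT.
Qed.

Definition solutions (A : 'M[F]_(m, d1)) (B : 'M[F]_(m, d2)) :=
  [set X : 'M[F]_(d, n) | [forall i : 'I_m,
    (L X i *m G1 == row i A) && [forall j : 'I_d2, qform (Ms j) (L X i) == B i j]]].

Definition qresidual (B : 'M[F]_(m, d2)) X : 'M[F]_(m, d2) :=
  \matrix_(i, j) (qform (Ms j) (L X i) - B i j).

Lemma in_solutionsE A B X : (X \in solutions A B) = (Gamma1L X == A) && (qresidual B X == 0).
Proof.
rewrite inE; apply/forallP/andP => [XN|[/eqP XA /eqP X0] i].
  split.
    by apply/eqP/row_matrixP => i; case/andP: (XN i) => /eqP <- _; rewrite row_mul.
  apply/eqP/matrixP => i j; rewrite !mxE.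
  by case/andP: (XN i) => _ /forallP /(_ j) /eqP ->; rewrite subrr.
rewrite /Lform_eval -row_mul -/(Gamma1L X) XA eqxx /=; apply/forallP => j.
by move/matrixP: X0 => /(_ i j); rewrite !mxE => /eqP; rewrite subr_eq0.
Qed.

Lemma qresidual_mxdot B lam X :
  \sum_i \sum_j lam i j * qresidual B X i j = Qlam lam X - \sum_i \sum_j lam i j * B i j.
Proof.
rewrite /Qlam -sumrB; apply: eq_bigr => i _; rewrite /Mlam bform_sumZ -sumrB.
by apply: eq_bigr => j _; rewrite mxE mulrBr.
Qed.

Lemma card_solutions_fourier A B :
  (#|solutions A B|%:R * (p ^ (m * d2))%:R : algC) =
  \sum_(lam : 'M[F]_(m, d2)) \sum_(X | Gamma1L X == A)
    e (\sum_i \sum_j lam i j * qresidual B X i j).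
Proof.
have -> : (#|solutions A B|%:R : algC) = \sum_(X | Gamma1L X == A) ((qresidual B X == 0)%:R : algC).
  rewrite -sum1_card natr_sum (bigID (fun X => qresidual B X == 0) (fun X => Gamma1L X == A)) /=.
  rewrite [X in _ + X]big1 ?addr0; last by move=> X /andP[_ /negbTE ->].
  by apply: eq_big => X; rewrite in_solutionsE // => /andP[_ ->].
rewrite mulr_suml exchange_big /=; apply: eq_bigr => X _.
by rewrite -(sum_echar_mxdot p_pr).
Qed.

Lemma sum_fiber_lam0 A B X0 : Gamma1L X0 = A ->
  \sum_(X | Gamma1L X == A) e (\sum_i \sum_j (0 : 'M[F]_(m, d2)) i j * qresidual B X i j) =
  #|kerGamma1L|%:R.
Proof.
move=> X0A; rewrite -(card_Gamma1L_fiber X0A) -sum1_card natr_sum.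
apply: eq_big => [X|X _]; first by rewrite inE.
by rewrite big1 ?echar0 // => i _; rewrite big1 // => j _; rewrite mxE mul0r.
Qed.

Lemma norm_sum_fiber_le A B X0 lam : Gamma1L X0 = A -> lam != 0 ->
  `|\sum_(X | Gamma1L X == A) e (\sum_i \sum_j lam i j * qresidual B X i j)| *
    sqrtC (p ^ r)%:R <= (#|kerGamma1L| * p ^ d1)%:R.
Proof.
move=> X0A lam_nz; rewrite (reindex_inj (addrI X0)) /=.
under eq_bigr do rewrite qresidual_mxdot.
rewrite (eq_bigl (fun k => k \in kerGamma1L)) ?norm_quad_sum_le // => k.
by rewrite Gamma1LD X0A inE -{2}[A]addr0 (inj_eq (addrI A)).
Qed.

Lemma card_solutions_dev A B X0 : Gamma1L X0 = A ->
  `|((#|solutions A B| * p ^ (m * d2))%:R - #|kerGamma1L|%:R : algC)| * sqrtC (p ^ r)%:R <=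
  (p ^ (m * d2) * #|kerGamma1L| * p ^ d1)%:R.
Proof.
move=> X0A; rewrite natrM card_solutions_fourier (bigD1 0) //= (sum_fiber_lam0 B X0A).
rewrite (addrC (#|kerGamma1L|%:R)) addrK.
have sqrt_ge0 : 0 <= sqrtC (p ^ r)%:R :> algC by rewrite sqrtC_ge0 ler0n.
apply: le_trans (ler_wpM2r sqrt_ge0 (ler_norm_sum _ _ _)) _; rewrite mulr_suml.
apply: le_trans (ler_sum _ (fun lam lam_nz => norm_sum_fiber_le B X0A lam_nz)) _.
rewrite sumr_const -mulrnA ler_nat; apply: leq_trans (leq_mul (leqnn _) (max_card _)) _.
by rewrite card_mx card_F mulnC mulnA.
Qed.

Lemma card_solutions_sqr_le A B : in_Z gamma A ->
  (((#|solutions A B| * p ^ (m * d2))%:Z - #|kerGamma1L|%:Z) ^+ 2 * (p ^ r)%:Z <=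
   ((p ^ (m * d2) * #|kerGamma1L| * p ^ d1)%:Z) ^+ 2)%R.
Proof.
move=> /Gamma1L_fiber_nonempty[X0 /(card_solutions_dev B) le_dev].
have := @lerXn2r _ 2 _ _ _ _ le_dev; rewrite ?nnegrE ?mulr_ge0 ?sqrtC_ge0 ?ler0n //.
move=> /(_ isT isT); rewrite exprMn real_normK ?rpredB ?realn // sqrtCK natrX => le_sq.
by rewrite -(ler_int algC) rmorphM /= !rmorphXn /= rmorphB; exact: le_sq.
Qed.

Lemma card_solutions_eq0 A B : ~ in_Z gamma A -> #|solutions A B| = 0%N.
Proof.
move=> notZ; apply: eq_card0 => X; rewrite in_solutionsE; apply/negP => /andP[/eqP XA _].
by apply: notZ => mu mu0; rewrite -XA /Gamma1L !mulmxA mu0 !mul0mx.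
Qed.

End QuadraticCounting.

Theorem lemma3p8 (R : realType) (p : nat) (Hp : prime p) (Hodd : odd p)
  (m d d' n d1 d2 r : nat)
  (gamma : 'M['F_p]_(m, d)) (Hsq : square_independent gamma)
  (Hd' : \rank gamma = d')
  (G1 : 'M['F_p]_(n, d1)) (HG1 : forall y : 'rV['F_p]_d1, exists x : 'rV['F_p]_n, x *m G1 = y)
  (Ms : 'I_d2 -> 'M['F_p]_n) (Hsym : forall j, (Ms j)^T = Ms j)
  (Hrank : qmap_rank_ge Ms r)
  (A : 'M['F_p]_(m, d1)) (B : 'M['F_p]_(m, d2)) :
  let prob : R :=
    #|[set X : 'M['F_p]_(d, n) | [forall i : 'I_m,
        (Lform_eval gamma X i *m G1 == row i A) &&
        [forall j : 'I_d2, qform (Ms j) (Lform_eval gamma X i) == B i j]]]|%:R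
    / #|{: 'M['F_p]_(d, n)}|%:R in
  (~ in_Z gamma A -> prob = 0) /\
  (in_Z gamma A ->
     `|prob - (p%:R : R) `^ (- ((d1 * d')%:R + (d2 * m)%:R))|
       <= (p%:R : R) `^ (d1%:R - (d' * d1)%:R - r%:R / 2)).
Proof.
rewrite /= -/(solutions gamma G1 Ms A B); split=> [notZ|inZ].
  by rewrite card_solutions_eq0 ?mul0r.
have K_gt0 : (0 < #|kerGamma1L gamma G1|)%N.
  by apply/card_gt0P; exists 0; rewrite inE /Gamma1L mulmx0 mul0mx.
rewrite card_mx card_Fp // -(card_kerGamma1L Hp gamma HG1) Hd' (mulnC d2) (mulnC d').
apply: powR_dev_le (prime_gt0 Hp) K_gt0 _.
exact (card_solutions_sqr_le Hp Hodd Hsq HG1 Hsym Hrank B inZ).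
Qed.
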